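(* In the post-attack setting with control policy $\gamma$ and attack policy $\phi$ (described in the context), suppose the state–action chain $\{(X_t,A_t)\}_{t\ge0}$ satisfies the Doeblin condition with parameters $(m_0,\lambda)$. Let $Z_t=(X_t,A_t,Y_t)$, let $\Omega(\gamma,\phi)=\{(z,z'):\mathbb P(Z_{t+1}=z'\mid Z_t=z)>0\}$, and let $f:\Omega(\gamma,\phi)\to\mathbb R$ with $\|f\|=\sup_{w\in\Omega(\gamma,\phi)}|f(w)|<\infty$. Set $S_n=\sum_{t=0}^{n-1}f(Z_t,Z_{t+1})$, $\lambda_1=\lambda R_{\min}\gamma_{\min}^2\phi_{\min}^2$ and $\mu=2(m_0+2)\|f\|/\lambda_1$. Then for every $\epsilon>0$ and every $n>\mu/\epsilon$, $$\mathbb P\big(|S_n-\mathbb E[S_n]|\ge n\epsilon\big)\le 2\exp\Big(-2\frac{(n\epsilon-\mu)^2}{n\mu^2}\Big).$$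
   Context: $\mathcal X=\{1,\dots,n\}$, $\mathcal A=\{1,\dots,m\}$; kernel $R_{(i,j),i'}=\mathbb P(X_{t+1}=i'\mid X_t=i,A_t=j)$; control policy $\gamma_{l,j}=\mathbb P(A_t=j\mid Y_t=l)$; attack policy $\phi_{(i,i'),l'}=\mathbb P(Y_{t+1}=l'\mid X_{t+1}=i',X_t=i)$. Given the past, $X_{t+1}\sim R_{(X_t,A_t),\cdot}$, then $Y_{t+1}\sim\phi_{(X_t,X_{t+1}),\cdot}$ conditionally independent of the rest given $(X_t,X_{t+1})$, then $A_{t+1}\sim\gamma_{Y_{t+1},\cdot}$ conditionally independent of the rest given $Y_{t+1}$. $R_{\min},\gamma_{\min},\phi_{\min}$ are the smallest nonzero entries of $R,\gamma,\phi$. Doeblin condition: a chain $W_t$ on a finite set $\mathcal W$ satisfies it with $(m_0,\lambda)$ if there is a probability measure $\psi$ on $\mathcal W$ with $\mathbb P(W_{m_0}\in B\mid W_0=w)\ge\lambda\psi(B)$ for all $w$, $B\subset\mathcal W$. *)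

From mathcomp Require Import all_boot all_order all_algebra.
From mathcomp Require Import reals.
From mathcomp Require Import sequences exp.
Set Implicit Arguments. Unset Strict Implicit. Unset Printing Implicit Defensive.
Import Order.TTheory GRing.Theory Num.Theory.
Local Open Scope ring_scope.

Section PostAttack.
Variable R : realType.

Definition stochastic {A B : finType} (K : A -> B -> R) : Prop :=
  (forall a b, 0 <= K a b) /\ (forall a, \sum_(b : B) K a b = 1).

Definition distribution {A : finType} (p : A -> R) : Prop :=
  (forall a, 0 <= p a) /\ \sum_(a : A) p a = 1.

Definition min_nonzero {A B : finType} (K : A -> B -> R) : R :=
  \big[Num.min/1]_(a : A) \big[Num.min/1]_(b : B | K a b != 0) K a b.

Variables (n m : nat).
(* states 'I_n, actions 'I_m, observations 'I_n *)
Definition XA := ('I_n * 'I_m)%type.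
Definition Zs := ('I_n * 'I_m * 'I_n)%type.

Variables (Rk : XA -> 'I_n -> R) (gam : 'I_n -> 'I_m -> R)
          (phi : 'I_n * 'I_n -> 'I_n -> R).

(* transition kernel of Z_t = (X_t, A_t, Y_t) *)
Definition Zkernel (z z' : Zs) : R :=
  let: (x, a, _) := z in let: (x', a', y') := z' in
  Rk (x, a) x' * phi (x, x') y' * gam y' a'.

Definition XAkernel (w w' : XA) : R :=
  \sum_(y' : 'I_n) Rk w w'.1 * phi (w.1, w'.1) y' * gam y' w'.2.

End PostAttack.

Fixpoint kpow (R : realType) (W : finType) (Q : W -> W -> R) (k : nat)
  (w w' : W) : R :=
  match k with
  | 0 => (w == w')%:R
  | k'.+1 => \sum_(v : W) kpow Q k' w v * Q v w'
  end.

Definition doeblin (R : realType) (W : finType) (Q : W -> W -> R)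
  (m0 : nat) (lam : R) : Prop :=
  0 < lam /\
  exists psi : W -> R, distribution psi /\
    forall (w : W) (B : {set W}),
      lam * (\sum_(w' in B) psi w') <= \sum_(w' in B) kpow Q m0 w w'.

Definition path_prob (R : realType) (Z : finType) (p0 : Z -> R)
  (K : Z -> Z -> R) (N : nat) (w : {ffun 'I_N.+1 -> Z}) : R :=
  p0 (w ord0) * \prod_(t < N) K (w (widen_ord (leqnSn N) t)) (w (lift ord0 t)).

Definition Ssum (R : realType) (Z : finType) (f : Z -> Z -> R) (N : nat)
  (w : {ffun 'I_N.+1 -> Z}) : R :=
  \sum_(t < N) f (w (widen_ord (leqnSn N) t)) (w (lift ord0 t)).

Definition supnorm_Omega (R : realType) (Z : finType) (K : Z -> Z -> R)
  (f : Z -> Z -> R) : R :=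
  \big[Num.max/0]_(p : Z * Z | 0 < K p.1 p.2) `|f p.1 p.2|.

From mathcomp Require Import all_boot all_order all_algebra.
From mathcomp Require Import reals sequences exp.
From mathcomp Require Import ring lra.
From mathcomp Require Import boolp topology normedtype derive realfun.
Import Order.TTheory GRing.Theory Num.Theory.
Import numFieldNormedType.Exports.
Local Open Scope ring_scope.

(* Let [h z = E[f(z, Z_1) | Z_0 = z]] and [G_T = sum_(k < T) K^k h]. Then
   [S_N - E S_N] is the sum of the increments [G_N(Z_0) - E G_N(Z_0)] and
   [f(Z_t, Z_(t+1)) + G_(N-t-1)(Z_(t+1)) - G_(N-t)(Z_t)] of a Doob martingale.  The Doeblin
   condition for [(X_t, A_t)] makes [K^(m0+1)] shrink oscillations by the factor [1 - lam],
   so [osc G_T <= 2 ||f|| (m0 + 1) / lam] for every [T] and each increment ranges over an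
   interval of length at most [mu] (the smaller constant [lam1 <= lam] only weakens this).
   Hoeffding's lemma bounds each conditional moment generating function by
   [exp (s^2 mu^2 / 8)], and the Chernoff bound gives [2 exp (-2 r^2 / ((N + 1) mu^2))],
   which is below the stated bound for [mu < r <= N mu]; for [r > N mu >= 2 N ||f||] the
   deviation event is empty. *)

Section ExponentialMoments.
Context {R : realType}.

Lemma is_derive_ge0_le {f df : R -> R} {a b : R} : a <= b ->
  (forall x : R, is_derive x 1 f (df x)) -> (forall x, a <= x <= b -> 0 <= df x) ->
  f a <= f b.
Proof.
move=> ab fd dfge0.
apply: (@ger0_derive1_le_cc R f a b); rewrite ?in_itv /= ?lexx ?ab //.
- move=> x; rewrite in_itv /= derive1E => /andP[ax xb].
  by case: (fd x) => _ ->; apply: dfge0; rewrite !ltW.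
- apply: continuous_subspaceT => x; apply: differentiable_continuous.
  by apply/derivable1_diffP; case: (fd x).
Qed.

Lemma is_derive_le0_le {f df : R -> R} {a b : R} : a <= b ->
  (forall x : R, is_derive x 1 f (df x)) -> (forall x, a <= x <= b -> df x <= 0) ->
  f b <= f a.
Proof.
move=> ab fd dfle0; rewrite -lerN2.
apply: (@is_derive_ge0_le (fun x => - f x) (fun x => - df x) a b) => // x.
by rewrite oppr_ge0; apply: dfle0.
Qed.

Lemma hoeffding_two_point {p : R} (u : R) : 0 <= p <= 1 ->
  (1 - p) * expR (- (p * u)) + p * expR ((1 - p) * u) <= expR (u ^+ 2 / 8).
Proof.
move=> /andP[p0 p1].
(* [Phi = ln D - p u - u^2/8] vanishes at [0] and [Phi' = (1 - p) - G] with [G]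
   nondecreasing and [G 0 = 1 - p], so [Phi] is maximal at [0]. *)
pose D v := 1 - p + p * expR v.
have D_gt0 v : 0 < D v by have := expR_gt0 v; rewrite /D; nra.
have dD (x : R) : is_derive x 1 D (p * expR x).
  by apply: is_derive_eq; rewrite add0r mul1r.
pose G v := v / 4 + (1 - p) * (D v)^-1.
have dG (x : R) : is_derive x 1 G (1/4 - (1 - p) * ((D x)^-2 * (p * expR x))).
  have := is_deriveV (lt0r_neq0 (D_gt0 x)) (dD x).
  by move=> ?; apply: is_derive_eq; rewrite /GRing.scale /=; ring.
have dG_ge0 (x : R) : 0 <= 1/4 - (1 - p) * ((D x)^-2 * (p * expR x)).
  have -> : 1/4 - (1 - p) * ((D x)^-2 * (p * expR x)) =
      ((1 - p - p * expR x) / (2 * D x)) ^+ 2.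
    by rewrite /D; field; rewrite -/(D x) lt0r_neq0.
  exact: sqr_ge0.
have G0 : G 0 = 1 - p by rewrite /G /D expR0 mulr1 subrK invr1 mulr1 mul0r add0r.
pose Phi v := ln (D v) - p * v - v ^+ 2 / 8.
have dPhi (x : R) : is_derive x 1 Phi ((1 - p) - G x).
  have := is_derive1_comp (is_derive1_ln (D_gt0 x)) (dD x).
  move=> ?; apply: is_derive_eq; rewrite /GRing.scale /= /G /D.
  by field; rewrite -/(D x) lt0r_neq0.
have Phi_le0 : Phi u <= 0.
  have <- : Phi 0 = 0 by rewrite /Phi /D expR0 mulr1 subrK ln1 mulr0 expr0n mul0r !subr0.
  have [u0|u0] := leP 0 u.
    apply: (is_derive_le0_le u0 dPhi) => x /andP[x0 _].
    by rewrite subr_le0 -G0; apply: (is_derive_ge0_le x0 dG).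
  apply: (is_derive_ge0_le (ltW u0) dPhi) => x /andP[_ x0].
  by rewrite subr_ge0 -G0; apply: (is_derive_ge0_le x0 dG).
have -> : (1 - p) * expR (- (p * u)) + p * expR ((1 - p) * u) = expR (- (p * u)) * D u.
  by rewrite /D mulrDr mulrCA -expRD; congr (_ + _ * expR _); ring.
rewrite -[D u]lnK ?posrE // -expRD ler_expR.
by move: Phi_le0; rewrite /Phi; lra.
Qed.

Lemma expR_tangent_le (x y : R) : expR x * (1 + (y - x)) <= expR y.
Proof. by rewrite -[in leRHS](subrK x y) expRD mulrC ler_wpM2r ?expR_ge0 ?expR_ge1Dx. Qed.

Lemma expR_le_chord (s a L x : R) : a <= x <= a + L ->
  L * expR (s * x) <= (a + L - x) * expR (s * a) + (x - a) * expR (s * (a + L)).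
Proof.
move=> /andP[ax xaL].
have -> : L * expR (s * x) = (a + L - x) * (expR (s * x) * (1 + (s * a - s * x)))
    + (x - a) * (expR (s * x) * (1 + (s * (a + L) - s * x))) by ring.
by rewrite lerD // ler_wpM2l ?expR_tangent_le // subr_ge0.
Qed.

Lemma ler_sum_supp (T : finType) (q u v : T -> R) : (forall t, 0 <= q t) ->
  (forall t, 0 < q t -> u t <= v t) -> \sum_t q t * u t <= \sum_t q t * v t.
Proof.
move=> q0 uv; apply: ler_sum => t _.
have [->|qt] := eqVneq (q t) 0; first by rewrite !mul0r.
by rewrite ler_pM2l ?uv // lt0r qt q0.
Qed.

Section FiniteDistribution.
Context {T : finType} {q : T -> R}.
Hypotheses (q_ge0 : forall t, 0 <= q t) (q_sum1 : \sum_t q t = 1).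

Lemma hoeffding_lemma_itv (X : T -> R) (a L s : R) : 0 <= L ->
  \sum_t q t * X t = 0 -> (forall t, 0 < q t -> a <= X t <= a + L) ->
  \sum_t q t * expR (s * X t) <= expR (s ^+ 2 * L ^+ 2 / 8).
Proof.
move=> L_ge0 qX0 Xab.
have mean_const c : \sum_t q t * c = c by rewrite -big_distrl /= q_sum1 mul1r.
have a_le0 : a <= 0.
  by rewrite -qX0 -[a]mean_const; apply: ler_sum_supp => // t /Xab /andP[].
have aL_ge0 : 0 <= a + L.
  by rewrite -qX0 -[a + L]mean_const; apply: ler_sum_supp => // t /Xab /andP[].
have [L0|L_neq0] := eqVneq L 0.
  rewrite L0 expr0n mulr0 mul0r expR0 -[leRHS]mean_const.
  apply: ler_sum_supp => // t /Xab; rewrite L0 addr0 => XI.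
  have -> : X t = 0 by lra.
  by rewrite mulr0 expR0.
have L0 : 0 < L by rewrite lt0r L_neq0.
set A := expR (s * a); set B := expR (s * (a + L)).
apply: (@le_trans _ _ (\sum_t q t * (((a + L - X t) * A + (X t - a) * B) / L))).
  by apply: ler_sum_supp => // t /Xab XI; rewrite ler_pdivlMr // mulrC expR_le_chord.
have -> : \sum_t q t * (((a + L - X t) * A + (X t - a) * B) / L) =
    ((a + L) * A - a * B) / L + (B - A) / L * \sum_t q t * X t.
  rewrite big_distrr -(mean_const (((a + L) * A - a * B) / L)) -big_split /=.
  by apply: eq_bigr => t _; field; rewrite lt0r_neq0.
have p01 : 0 <= - a / L <= 1 by rewrite divr_ge0 ?ler_pdivrMr //=; lra.
have := hoeffding_two_point (s * L) p01.
have -> : - (- a / L * (s * L)) = s * a by field; rewrite lt0r_neq0.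
have -> : (1 - - a / L) * (s * L) = s * (a + L) by field; rewrite lt0r_neq0.
rewrite qX0 mulr0 addr0 exprMn.
by congr (_ <= _); rewrite /A /B; field; rewrite lt0r_neq0.
Qed.

Lemma hoeffding_lemma (X : T -> R) (L s : R) : \sum_t q t * X t = 0 ->
  (forall t t', 0 < q t -> 0 < q t' -> X t - X t' <= L) ->
  \sum_t q t * expR (s * X t) <= expR (s ^+ 2 * L ^+ 2 / 8).
Proof.
move=> qX0 XL.
have [t0 qt0] : exists t0, 0 < q t0.
  apply/existsP; apply: contraT; rewrite negb_exists => /forallP q_le0.
  have := ltr01 : 0 < 1 :> R; rewrite -q_sum1 ltNge sumr_le0 // => t _.
  by rewrite leNgt q_le0.
have [tm qtm tm_min] := @arg_minP _ _ _ t0 (fun t => 0 < q t) X qt0.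
apply: (@hoeffding_lemma_itv X (X tm)) => //.
  by have := XL _ _ qt0 qt0; rewrite subrr.
by move=> t qt; rewrite tm_min //= -lerBlDl XL.
Qed.

Lemma expR_mean_le (X : T -> R) :
  expR (\sum_t q t * X t) <= \sum_t q t * expR (X t).
Proof.
set m := \sum_t q t * X t.
apply: le_trans (ler_sum _ (fun t _ => ler_wpM2l (q_ge0 t) (expR_tangent_le m (X t)))).
rewrite le_eqVlt; apply/predU1l.
under eq_bigr do rewrite mulrCA mulrDr mulr1 mulrBr.
by rewrite -big_distrr /= big_split sumrB /= -big_distrl /= q_sum1 mul1r subrr addr0 mulr1.
Qed.

Lemma chernoff_two_sided (X : T -> R) (C r : R) : 0 < C -> 0 <= r ->
  (forall s, \sum_t q t * expR (s * X t) <= expR (C * s ^+ 2)) ->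
  \sum_(t | r <= `|X t|) q t <= 2 * expR (- (r ^+ 2 / (4 * C))).
Proof.
move=> C_gt0 r_ge0 mgf; set s := r / (2 * C).
have s_ge0 : 0 <= s by rewrite divr_ge0 // mulr_ge0 // ltW.
pose tails t := expR (s * X t - s * r) + expR (- s * X t - s * r).
apply: (@le_trans _ _ (\sum_t q t * tails t)).
  rewrite [leRHS](bigID (fun t => r <= `|X t|)) /= -[leLHS]addr0 lerD //; last first.
    by apply: sumr_ge0 => t _; rewrite mulr_ge0 ?addr_ge0 ?expR_ge0.
  apply: ler_sum => t rX; rewrite -[leLHS]mulr1 ler_wpM2l //.
  have [X_ge0|X_lt0] := lerP 0 (X t).
    have : 1 <= expR (s * X t - s * r).
      by rewrite -expR0 ler_expR subr_ge0 ler_wpM2l // -(ger0_norm X_ge0).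
    by have := expR_ge0 (- s * X t - s * r); rewrite /tails; lra.
  have : 1 <= expR (- s * X t - s * r).
    by rewrite -expR0 ler_expR subr_ge0 mulNr -mulrN ler_wpM2l // -(ltr0_norm X_lt0).
  by have := expR_ge0 (s * X t - s * r); rewrite /tails; lra.
have -> : \sum_t q t * tails t = expR (- (s * r)) *
    (\sum_t q t * expR (s * X t) + \sum_t q t * expR (- s * X t)).
  rewrite -big_split big_distrr /=; apply: eq_bigr => t _.
  by rewrite /tails !expRD; ring.
apply: (@le_trans _ _ (expR (- (s * r)) * (2 * expR (C * s ^+ 2)))).
  by rewrite ler_pM2l ?expR_gt0 //; have := mgf s; have := mgf (- s); rewrite sqrrN; lra.
rewrite mulrCA -expRD ler_pM2l // ler_expR le_eqVlt; apply/predU1l.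
by rewrite /s; field; rewrite lt0r_neq0.
Qed.

End FiniteDistribution.
End ExponentialMoments.

Section Oscillation.
Context {R : realType}.

Definition osc_le {T : Type} (u : T -> R) (c : R) := forall x y, u x - u y <= c.

Lemma osc_leD {T : Type} {u v : T -> R} {c1 c2 : R} :
  osc_le u c1 -> osc_le v c2 -> osc_le (fun z => u z + v z) (c1 + c2).
Proof. by move=> u_c1 v_c2 x y; have := u_c1 x y; have := v_c2 x y; lra. Qed.

Lemma osc_leW {T : Type} {u : T -> R} {c1 c2 : R} :
  osc_le u c1 -> c1 <= c2 -> osc_le u c2.
Proof. by move=> u_c1 c12 x y; apply: le_trans (u_c1 x y) c12. Qed.

Lemma osc_le_norm {T : Type} {u : T -> R} {F : R} :
  (forall x, `|u x| <= F) -> osc_le u (2 * F).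
Proof.
move=> uF x y; have := uF x; have := uF y.
by rewrite !ler_norml => /andP[? ?] /andP[? ?]; lra.
Qed.

Lemma sumr_osc_le {T : finType} {a b u : T -> R} {c : R} :
  (forall t, 0 <= a t) -> (forall t, 0 <= b t) -> \sum_t a t = \sum_t b t ->
  osc_le u c -> \sum_t a t * u t - \sum_t b t * u t <= (\sum_t a t) * c.
Proof.
move=> a0 b0 ab uc.
have [t0 _|T0] := pickP (@predT T); last first.
  by rewrite !big_pred0 ?subrr ?mul0r // => t; have := T0 t.
have [tm _ tm_min] := @arg_minP _ _ _ t0 predT u erefl.
have ua : \sum_t a t * u t <= \sum_t a t * (u tm + c).
  by apply: ler_sum => t _; rewrite ler_wpM2l // -lerBlDl uc.
have ub : \sum_t b t * u tm <= \sum_t b t * u t.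
  by apply: ler_sum => t _; rewrite ler_wpM2l // tm_min.
move: ua ub; rewrite -!big_distrl /= -ab; lra.
Qed.

End Oscillation.

Section MarkovOperator.
Context {R : realType} {Z : finType}.
Variable K : Z -> Z -> R.

Definition markov_op (u : Z -> R) (z : Z) : R := \sum_z' K z z' * u z'.

Lemma markov_opD (u v : Z -> R) :
  markov_op (fun z => u z + v z) = fun z => markov_op u z + markov_op v z.
Proof. by apply: funext => z; rewrite -big_split; apply: eq_bigr => z' _; rewrite mulrDr. Qed.

Definition osc_contraction (M : nat) (lam : R) := forall (u : Z -> R) (c : R),
  osc_le u c -> osc_le (iter M markov_op u) ((1 - lam) * c).

Variable h : Z -> R.

Fixpoint expected_sum (T : nat) : Z -> R :=
  if T is T'.+1 then fun z => h z + markov_op (expected_sum T') z else fun=> 0.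

Lemma expected_sumD (T M : nat) :
  expected_sum (T + M) = fun z => expected_sum M z + iter M markov_op (expected_sum T) z.
Proof.
elim: M => [|M IH]; first by apply: funext => z; rewrite addn0 add0r.
by rewrite addnS /= IH markov_opD; apply: funext => z; rewrite addrA.
Qed.

Hypothesis K_ge0 : forall z z', 0 <= K z z'.
Hypothesis K_sum1 : forall z, \sum_z' K z z' = 1.

Lemma markov_op_osc {u : Z -> R} {c : R} : osc_le u c -> osc_le (markov_op u) c.
Proof.
move=> uc x y; have := sumr_osc_le (K_ge0 x) (K_ge0 y) _ uc.
by rewrite !K_sum1 mul1r; apply.
Qed.

Variable F : R.
Hypothesis hF : forall z, `|h z| <= F.

Lemma expected_sum_osc_linear (T : nat) : osc_le (expected_sum T) (2 * F * T%:R).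
Proof.
elim: T => [|T IH]; first by move=> x y; rewrite subrr mulr0.
apply: osc_leW (osc_leD (osc_le_norm hF) (markov_op_osc IH)) _.
by rewrite -addn1 natrD le_eqVlt; apply/predU1l; ring.
Qed.

Lemma expected_sum_osc (M : nat) (lam : R) : (0 < M)%N -> 0 < lam <= 1 ->
  osc_contraction M lam -> forall T, osc_le (expected_sum T) (2 * F * M%:R / lam).
Proof.
move=> M_gt0 /andP[lam_gt0 lam_le1] contr T.
elim/ltn_ind: T => T IH.
have [TM|MT] := ltnP T M.
  move=> x y; have F_ge0 : 0 <= F := le_trans (normr_ge0 _) (hF x).
  apply: le_trans (expected_sum_osc_linear T x y) _.
  have : T%:R <= M%:R :> R by rewrite ler_nat ltnW.
  have : 0 <= F * T%:R by rewrite mulr_ge0.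
  rewrite ler_pdivlMr //; nra.
rewrite -(subnK MT) expected_sumD.
have lt_TM_T : (T - M < T)%N by rewrite ltn_subrL M_gt0 (leq_trans M_gt0 MT).
apply: osc_leW (osc_leD (expected_sum_osc_linear M) (contr _ _ (IH _ lt_TM_T))) _.
by rewrite le_eqVlt; apply/predU1l; field; rewrite lt0r_neq0.
Qed.

End MarkovOperator.

Section PathSums.
Context {R : realType} {Z : finType}.

Definition path_cons {N} (z : Z) (w : {ffun 'I_N.+1 -> Z}) : {ffun 'I_N.+2 -> Z} :=
  [ffun i => if unlift ord0 i is Some j then w j else z].

Lemma path_cons0 N z (w : {ffun 'I_N.+1 -> Z}) : path_cons z w ord0 = z.
Proof. by rewrite ffunE unlift_none. Qed.

Lemma path_cons_lift N z (w : {ffun 'I_N.+1 -> Z}) i : path_cons z w (lift ord0 i) = w i.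
Proof. by rewrite ffunE liftK. Qed.

Lemma sum_path_cons N (Phi : {ffun 'I_N.+2 -> Z} -> R) :
  \sum_w Phi w = \sum_z \sum_(w : {ffun 'I_N.+1 -> Z}) Phi (path_cons z w).
Proof.
rewrite pair_big /= (reindex (fun p : Z * {ffun 'I_N.+1 -> Z} => path_cons p.1 p.2)) //=.
exists (fun w : {ffun 'I_N.+2 -> Z} => (w ord0, [ffun i => w (lift ord0 i)])).
  move=> [z w] _ /=; rewrite path_cons0; congr pair.
  by apply/ffunP => i; rewrite ffunE path_cons_lift.
move=> w _; apply/ffunP => i; rewrite ffunE.
by case: (unliftP ord0 i) => [j ->|->]; rewrite ?ffunE.
Qed.

Fixpoint path_mass (Fk : nat -> Z -> Z -> R) (k t : nat) (z : Z) : R :=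
  if k is k'.+1 then \sum_z' Fk t z z' * path_mass Fk k' t.+1 z' else 1.

Lemma sum_path_weight (Fk : nat -> Z -> Z -> R) N (G : Z -> R) t0 :
  \sum_(w : {ffun 'I_N.+1 -> Z}) G (w ord0) *
     \prod_(t < N) Fk (t0 + t)%N (w (widen_ord (leqnSn N) t)) (w (lift ord0 t))
  = \sum_z G z * path_mass Fk N t0 z.
Proof.
elim: N G t0 => [|N IH] G t0.
  rewrite (reindex (fun z : Z => [ffun _ : 'I_1 => z])) /=.
    by apply: eq_bigr => z _; rewrite big_ord0 ffunE.
  exists (fun w : {ffun 'I_1 -> Z} => w ord0) => [z _|w _]; first by rewrite ffunE.
  by apply/ffunP => i; rewrite ffunE (ord1 i).
rewrite sum_path_cons; apply: eq_bigr => z _ /=.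
rewrite -(IH (Fk t0 z) t0.+1) big_distrr /=; apply: eq_bigr => w _.
rewrite big_ord_recl path_cons0 addn0.
have -> : widen_ord (leqnSn N.+1) ord0 = ord0 by apply: val_inj.
rewrite path_cons0 path_cons_lift; congr (_ * (_ * _)); apply: eq_bigr => i _.
have -> : widen_ord (leqnSn N.+1) (lift ord0 i) = lift ord0 (widen_ord (leqnSn N) i).
  exact: val_inj.
by rewrite !path_cons_lift addnS.
Qed.

Lemma path_mass_le {Fk : nat -> Z -> Z -> R} {E : R} {N : nat} :
  0 <= E -> (forall t z z', (t < N)%N -> 0 <= Fk t z z') ->
  (forall t z, (t < N)%N -> \sum_z' Fk t z z' <= E) ->
  forall k t z, (t + k <= N)%N -> 0 <= path_mass Fk k t z <= E ^+ k.
Proof.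
move=> E0 F0 F1; elim=> [|k IH] t z tkN /=; first by rewrite ler01 lexx.
have tN : (t < N)%N by apply: leq_trans tkN; rewrite -addSnnS leq_addr.
have IHk z' : 0 <= path_mass Fk k t.+1 z' <= E ^+ k by rewrite IH // addSnnS.
rewrite sumr_ge0 => [|z' _]; last by rewrite mulr_ge0 ?F0 //; case/andP: (IHk z').
apply: (@le_trans _ _ (\sum_z' Fk t z z' * E ^+ k)).
  by apply: ler_sum => z' _; rewrite ler_wpM2l ?F0 //; case/andP: (IHk z').
by rewrite -big_distrl exprS ler_wpM2r ?exprn_ge0 ?F1.
Qed.

Lemma path_mass1 (K : Z -> Z -> R) : (forall z, \sum_z' K z z' = 1) ->
  forall k t z, path_mass (fun=> K) k t z = 1.
Proof. by move=> K1; elim=> [|k IH] t z //=; under eq_bigr do rewrite IH mulr1. Qed.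

End PathSums.

Lemma lin_le_sqr_eq0 {R : realType} (x C : R) : (forall s, s * x <= C * s ^+ 2) -> x = 0.
Proof.
move=> xC; set d := `|C| + 1.
have d_gt0 : 0 < d by rewrite ltr_wpDl.
have := xC (x / d).
have -> : x / d * x = x ^+ 2 * d / d ^+ 2 by field; rewrite lt0r_neq0.
have -> : C * (x / d) ^+ 2 = C * x ^+ 2 / d ^+ 2 by field; rewrite lt0r_neq0.
rewrite ler_pM2r ?invr_gt0 ?exprn_gt0 // => le.
have x2_le0 : x ^+ 2 <= 0.
  by have := ler_norm C; have := sqr_ge0 x; rewrite /d in le; nra.
by apply/eqP; rewrite -sqrf_eq0 eq_le x2_le0 sqr_ge0.
Qed.

Lemma hoeffding_exponent_le {R : realType} (N : nat) (mu r : R) : 0 < mu -> mu <= r <= N%:R * mu ->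
  - (2 * r ^+ 2 / (N.+1%:R * mu ^+ 2)) <= - 2 * ((r - mu) ^+ 2 / (N%:R * mu ^+ 2)).
Proof.
move=> mu_gt0 /andP[mu_le_r r_le].
have N_gt0 : 0 < N%:R :> R.
  by rewrite -(pmulr_lgt0 _ mu_gt0); apply: lt_le_trans r_le; apply: lt_le_trans mu_le_r.
have key : (N%:R + 1) * (r - mu) ^+ 2 <= N%:R * r ^+ 2.
  have -> : N%:R * r ^+ 2 = (N%:R + 1) * (r - mu) ^+ 2 +
      ((r - mu) * (N%:R * mu - (r - mu)) + N%:R * mu * r) by ring.
  by rewrite lerDl addr_ge0 ?mulr_ge0 //; lra.
rewrite mulNr lerN2 -[N.+1%:R]natr1 -subr_ge0.
have -> : 2 * r ^+ 2 / ((N%:R + 1) * mu ^+ 2) - 2 * ((r - mu) ^+ 2 / (N%:R * mu ^+ 2)) =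
    2 * (N%:R * r ^+ 2 - (N%:R + 1) * (r - mu) ^+ 2) / (N%:R * (N%:R + 1) * mu ^+ 2).
  by field; rewrite !lt0r_neq0 // ltr_pwDl.
apply: divr_ge0; first by rewrite mulr_ge0 // subr_ge0.
by rewrite !mulr_ge0 ?addr_ge0 ?sqr_ge0 // ltW.
Qed.

Section MarkovChainConcentration.
Context {R : realType} {Z : finType}.
Variables (K : Z -> Z -> R) (p0 : Z -> R) (f : Z -> Z -> R) (N : nat).
Hypotheses (K_ge0 : forall z z', 0 <= K z z') (K_sum1 : forall z, \sum_z' K z z' = 1).
Hypotheses (p0_ge0 : forall z, 0 <= p0 z) (p0_sum1 : \sum_z p0 z = 1).

Local Notation path := {ffun 'I_N.+1 -> Z}.
Local Notation P := (path_prob p0 K (N := N)).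
Local Notation S := (Ssum f (N := N)).
Local Notation ES := (\sum_(w : path) P w * S w).

Lemma path_prob_ge0 (w : path) : 0 <= P w.
Proof. by rewrite mulr_ge0 ?prodr_ge0. Qed.

Lemma sum_path_prob : \sum_(w : path) P w = 1.
Proof.
have := sum_path_weight (fun=> K) N p0 0; rewrite /path_prob => ->.
by under eq_bigr do rewrite path_mass1 // mulr1.
Qed.

Lemma sum_path_prob_le1 (E : pred path) : \sum_(w : path | E w) P w <= 1.
Proof.
rewrite -[leRHS]sum_path_prob [leRHS](bigID E) /= lerDl.
by rewrite sumr_ge0 // => w _; rewrite path_prob_ge0.
Qed.

Variable F : R.
Hypothesis f_le : forall z z', 0 < K z z' -> `|f z z'| <= F.

Local Notation G := (expected_sum K (fun z => markov_op K (f z) z)).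
Local Notation c := (\sum_z p0 z * G N z).
Definition doob_incr (t : nat) (z z' : Z) := f z z' + G (N - t.+1) z' - G (N - t) z.

Lemma norm_markov_op_le z : `|markov_op K (f z) z| <= F.
Proof.
apply: le_trans (ler_norm_sum _ _ _) _.
rewrite -[leRHS]mulr1 -(K_sum1 z) big_distrr /=.
under eq_bigr do rewrite normrM ger0_norm //.
by under [leRHS]eq_bigr do rewrite mulrC; apply: ler_sum_supp => // z' /f_le.
Qed.

Lemma Ssum_telescope (w : path) : S w - c = (G N (w ord0) - c) +
  \sum_(t < N) doob_incr t (w (widen_ord (leqnSn N) t)) (w (lift ord0 t)).
Proof.
pose a k := G (N - k)%N (w (inord k)).
have G_tele : \sum_(t < N) (G (N - t.+1) (w (lift ord0 t)) -
    G (N - t) (w (widen_ord (leqnSn N) t))) = - G N (w ord0).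
  transitivity (\sum_(t < N) (a t.+1 - a t)).
    apply: eq_bigr => t _; rewrite /a; congr (G _ (w _) - G _ (w _)); apply: val_inj.
      by rewrite /= inordK // ltnS.
    by rewrite /= inordK // ltnS ltnW.
  rewrite -(big_mkord xpredT (fun t => a t.+1 - a t)) telescope_sumr // /a subnn subn0.
  by rewrite add0r (_ : inord 0 = ord0) //; apply: val_inj; rewrite /= inordK.
rewrite /doob_incr /=.
under [X in _ = _ + X]eq_bigr do rewrite -addrA.
rewrite big_split /= G_tele.
by rewrite /Ssum; ring.
Qed.

Lemma incr_mean0 {t} z : (t < N)%N -> \sum_z' K z z' * doob_incr t z z' = 0.
Proof.
move=> tN; rewrite /doob_incr -(subnSK tN) /=.
under eq_bigr do rewrite mulrBr mulrDr.
by rewrite sumrB big_split /= -big_distrl /= K_sum1 mul1r subrr.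
Qed.

Variables (Lg mu : R).
Hypotheses (F_ge0 : 0 <= F) (Lg_ge0 : 0 <= Lg).
Hypothesis G_osc : forall T, osc_le (G T) Lg.
Hypothesis mu_ge : 2 * F + Lg <= mu.

Lemma incr_mgf_le t z s : (t < N)%N ->
  \sum_z' K z z' * expR (s * doob_incr t z z') <= expR (s ^+ 2 * mu ^+ 2 / 8).
Proof.
move=> tN; apply: hoeffding_lemma (K_ge0 z) (K_sum1 z) _ _ _ (incr_mean0 z tN) _.
move=> z1 z2 /f_le f1 /f_le f2; have := G_osc (N - t.+1) z1 z2.
by move: f1 f2 mu_ge; rewrite /doob_incr !ler_norml => /andP[? ?] /andP[? ?] ? ?; lra.
Qed.

Lemma path_mgf_le s :
  \sum_(w : path) P w * expR (s * (S w - c)) <= expR (s ^+ 2 * mu ^+ 2 / 8) ^+ N.+1.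
Proof.
set E := expR (s ^+ 2 * mu ^+ 2 / 8).
pose Fk t z z' := K z z' * expR (s * doob_incr t z z').
pose G0 z := p0 z * expR (s * (G N z - c)).
have path_factor (w : path) : P w * expR (s * (S w - c)) = G0 (w ord0) *
    \prod_(t < N) Fk (0 + t)%N (w (widen_ord (leqnSn N) t)) (w (lift ord0 t)).
  rewrite Ssum_telescope mulrDr expRD big_distrr /= expR_sum /path_prob big_split /=.
  by rewrite /G0; ring.
under eq_bigr do rewrite path_factor.
rewrite sum_path_weight.
have Fk_ge0 t z z' : (t < N)%N -> 0 <= Fk t z z' by rewrite /Fk mulr_ge0 ?expR_ge0.
have Fk_le t z : (t < N)%N -> \sum_z' Fk t z z' <= E by exact: incr_mgf_le.
apply: (@le_trans _ _ (\sum_z G0 z * E ^+ N)).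
  apply: ler_sum => z _; rewrite ler_wpM2l ?mulr_ge0 ?expR_ge0 //.
  by case/andP: (path_mass_le (expR_ge0 _) Fk_ge0 Fk_le N 0 z (leqnn N)).
rewrite -big_distrl /= exprS ler_pM2r ?exprn_gt0 ?expR_gt0 // /G0 /E.
apply: hoeffding_lemma p0_ge0 p0_sum1 _ _ _ _ _.
  by under eq_bigr do rewrite mulrBr; rewrite sumrB -big_distrl /= p0_sum1 mul1r subrr.
by move=> z1 z2 _ _; have := G_osc N z1 z2; move: mu_ge F_ge0; lra.
Qed.

Lemma mean_Ssum : ES = c.
Proof.
apply/eqP; rewrite -subr_eq0; apply/eqP.
apply: (@lin_le_sqr_eq0 _ _ (N.+1%:R * mu ^+ 2 / 8)) => s.
have -> : s * (ES - c) = \sum_(w : path) P w * (s * (S w - c)).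
  under [RHS]eq_bigr do rewrite mulrCA mulrBr.
  by rewrite -big_distrr sumrB /= -[in RHS]big_distrl /= sum_path_prob mul1r.
rewrite -ler_expR (le_trans (expR_mean_le path_prob_ge0 sum_path_prob _)) //.
by rewrite (le_trans (path_mgf_le s)) // -expRM_natl ler_expR le_eqVlt; apply/predU1l; ring.
Qed.

Theorem markov_chain_concentration {r : R} : 0 < mu -> 0 <= r ->
  \sum_(w : path | r <= `|S w - ES|) P w <=
  2 * expR (- (2 * r ^+ 2 / (N.+1%:R * mu ^+ 2))).
Proof.
move=> mu_gt0 r_ge0; set C := N.+1%:R * mu ^+ 2 / 8.
have C_gt0 : 0 < C by rewrite divr_gt0 ?mulr_gt0 ?exprn_gt0 ?ltr0Sn.
have -> : 2 * r ^+ 2 / (N.+1%:R * mu ^+ 2) = r ^+ 2 / (4 * C).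
  by rewrite /C; field; rewrite !lt0r_neq0 // ltr_pwDl ?ler0n.
apply: (chernoff_two_sided path_prob_ge0 (fun w => S w - ES) _ _ C_gt0 r_ge0) => s.
rewrite mean_Ssum (le_trans (path_mgf_le s)) // -expRM_natl ler_expR.
by rewrite le_eqVlt; apply/predU1l; rewrite /C; ring.
Qed.

Lemma Ssum_le (w : path) : P w != 0 -> `|S w| <= N%:R * F.
Proof.
move=> Pw_neq0; apply: le_trans (ler_norm_sum _ _ _) _.
rewrite mulr_natl -[in leRHS](card_ord N) -sumr_const; apply: ler_sum => t _.
apply: f_le; rewrite lt0r K_ge0 andbT; apply: contraNneq Pw_neq0 => K0.
by rewrite /path_prob (bigD1 t) //= K0 mul0r mulr0.
Qed.

Lemma deviation_gt_range_eq0 (r : R) : 2 * N%:R * F < r ->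
  \sum_(w : path | r <= `|S w - ES|) P w = 0.
Proof.
move=> rF.
have ES_le : `|ES| <= N%:R * F.
  apply: le_trans (ler_norm_sum _ _ _) _.
  apply: (@le_trans _ _ (\sum_(w : path) P w * (N%:R * F))); last first.
    by rewrite -big_distrl /= sum_path_prob mul1r.
  apply: ler_sum => w _; rewrite normrM ger0_norm ?path_prob_ge0 //.
  have [->|Pw_neq0] := eqVneq (P w) 0; first by rewrite !mul0r.
  by rewrite ler_pM2l ?Ssum_le // lt0r Pw_neq0 path_prob_ge0.
apply: big1 => w rS; apply/eqP; apply: contraTT rS => /Ssum_le Sw_le.
by rewrite -ltNge (le_lt_trans (ler_normB _ _)) //; lra.
Qed.

Theorem markov_chain_deviation_le {r : R} : 0 < mu -> mu < r ->
  \sum_(w : path | r <= `|S w - ES|) P w <=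
  2 * expR (- 2 * ((r - mu) ^+ 2 / (N%:R * mu ^+ 2))).
Proof.
move=> mu_gt0 mu_lt_r.
have [r_big|r_le] := ltP (N%:R * mu) r.
  rewrite deviation_gt_range_eq0 ?mulr_ge0 ?expR_ge0 //.
  apply: le_lt_trans r_big; rewrite (mulrC 2) -mulrA ler_wpM2l //.
  by apply: le_trans mu_ge; rewrite lerDl.
have r_ge0 : 0 <= r by rewrite (le_trans (ltW mu_gt0)) ?ltW.
apply: le_trans (markov_chain_concentration mu_gt0 r_ge0) _.
by rewrite ler_pM2l // ler_expR hoeffding_exponent_le // ltW // r_le.
Qed.

End MarkovChainConcentration.

Section KernelPowers.
Context {R : realType} {W : finType} {Q : W -> W -> R}.
Hypothesis Q_sum1 : forall w, \sum_w' Q w w' = 1.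

Lemma kpow_sum1 k w : \sum_w' kpow Q k w w' = 1.
Proof.
elim: k => [|k IH] /=.
  by rewrite (bigD1 w) //= eqxx big1 ?addr0 // => w' /negbTE; rewrite eq_sym => ->.
rewrite exchange_big /= -IH; apply: eq_bigr => v _.
by rewrite -big_distrr /= Q_sum1 mulr1.
Qed.

Lemma doeblin_le1 {m0 : nat} {lam : R} : doeblin Q m0 lam -> lam <= 1.
Proof.
move=> [_ [psi [[_ psi_sum1] minor]]].
have [w _|W0] := pickP (@predT W); last first.
  by move: psi_sum1; rewrite big_pred0 // => /eqP; rewrite eq_sym oner_eq0.
have sumT (g : W -> R) : \sum_(w' in [set: W]) g w' = \sum_w' g w'.
  by apply: eq_bigl => w'; rewrite inE.
by have := minor w [set: W]; rewrite !sumT psi_sum1 kpow_sum1 mulr1.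
Qed.

End KernelPowers.

Section PostAttackChain.
Context {R : realType} {n m : nat}.
Context {Rk : 'I_n * 'I_m -> 'I_n -> R} {gam : 'I_n -> 'I_m -> R}
  {phi : 'I_n * 'I_n -> 'I_n -> R}.
Hypotheses (sR : stochastic Rk) (sG : stochastic gam) (sP : stochastic phi).

Local Notation K := (Zkernel Rk gam phi).
Local Notation Q := (XAkernel Rk gam phi).

Lemma markov_op_Zkernel (v : 'I_n * 'I_m -> R) z :
  markov_op K (fun z' => v (z'.1.1, z'.1.2)) z = \sum_w Q (z.1.1, z.1.2) w * v w.
Proof.
case: z => [[x a] y]; rewrite /markov_op /XAkernel /=.
under [RHS]eq_bigr do rewrite big_distrl /=.
by rewrite pair_big /=; apply: eq_bigr => -[[x' a'] y'].
Qed.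

Lemma XAkernel_sum1 w : \sum_w' Q w w' = 1.
Proof.
case: sR sG sP => [_ R1] [_ G1] [_ P1].
rewrite -(pair_big predT predT (fun x' a' => Q w (x', a'))) /= -[RHS](R1 w).
apply: eq_bigr => x' _; rewrite /XAkernel /= exchange_big /=.
rewrite -[RHS]mulr1 -(P1 (w.1, x')) big_distrr /=; apply: eq_bigr => y _.
by rewrite -big_distrr /= G1 mulr1.
Qed.

Lemma Zkernel_ge0 z z' : 0 <= K z z'.
Proof.
case: sR sG sP => [R0 _] [G0 _] [P0 _].
by case: z => [[x a] y]; case: z' => [[x' a'] y']; rewrite !mulr_ge0.
Qed.

Lemma Zkernel_sum1 z : \sum_z' K z z' = 1.
Proof.
have := markov_op_Zkernel (fun=> 1) z; rewrite /markov_op.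
by under eq_bigr do rewrite mulr1; under [in RHS]eq_bigr do rewrite mulr1; rewrite XAkernel_sum1.
Qed.

Lemma iter_markov_op_Zkernel k (v : 'I_n * 'I_m -> R) z :
  iter k (markov_op K) (fun z' => v (z'.1.1, z'.1.2)) z
  = \sum_w kpow Q k (z.1.1, z.1.2) w * v w.
Proof.
elim: k v z => [|k IH] v z.
  rewrite (bigD1 (z.1.1, z.1.2)) //= eqxx mul1r big1 ?addr0 // => w /negbTE.
  by rewrite eq_sym => ->; rewrite mul0r.
rewrite iterSr.
have -> : markov_op K (fun z' => v (z'.1.1, z'.1.2)) =
    fun z' => (fun w => \sum_w' Q w w' * v w') (z'.1.1, z'.1.2).
  by apply: funext => z'; rewrite markov_op_Zkernel.
rewrite (IH (fun w => \sum_w' Q w w' * v w')); under eq_bigr do rewrite big_distrr /=.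
rewrite exchange_big /=; apply: eq_bigr => w' _.
by rewrite big_distrl /=; apply: eq_bigr => w _; rewrite mulrA.
Qed.

Lemma doeblin_osc_contraction {m0 : nat} {lam : R} :
  doeblin Q m0 lam -> osc_contraction K m0.+1 lam.
Proof.
move=> [_ [psi [[_ psi_sum1] minor]]] u c uc z1 z2.
pose v w := markov_op K u (w.1, w.2, z1.2).
rewrite iterSr.
have -> : markov_op K u = fun z => v (z.1.1, z.1.2) by apply: funext => -[[x a] y].
rewrite !iter_markov_op_Zkernel.
(* Removing the common minorant [lam psi] from two rows of [Q ^ m0] leaves rows of mass
   [1 - lam]. *)
pose a (z : Zs n m) w := kpow Q m0 (z.1.1, z.1.2) w - lam * psi w.
have a_ge0 z w : 0 <= a z w.
  by rewrite subr_ge0; have := minor (z.1.1, z.1.2) [set w]; rewrite !big_set1.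
have a_sum z : \sum_w a z w = 1 - lam.
  rewrite sumrB (kpow_sum1 XAkernel_sum1) -big_distrr /=.
  by rewrite psi_sum1 mulr1.
have v_osc : osc_le v c.
  by move=> w w'; apply: (markov_op_osc _ Zkernel_ge0 Zkernel_sum1 uc).
have := sumr_osc_le (a_ge0 z1) (a_ge0 z2) _ v_osc; rewrite !a_sum => /(_ erefl).
apply: le_trans; rewrite le_eqVlt; apply/predU1l.
rewrite /a; under [in RHS]eq_bigr do rewrite mulrBl.
by under [X in _ = _ - X]eq_bigr do rewrite mulrBl; rewrite !sumrB; ring.
Qed.

Lemma Zkernel_expected_sum_osc {f : Zs n m -> Zs n m -> R} {F : R} {m0 : nat} {lam : R} :
  (forall z z', 0 < K z z' -> `|f z z'| <= F) -> doeblin Q m0 lam ->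
  forall T, osc_le (expected_sum K (fun z => markov_op K (f z) z) T) (2 * F * m0.+1%:R / lam).
Proof.
move=> f_le doeb; have [lam_gt0 _] := doeb.
have hF := norm_markov_op_le _ _ Zkernel_ge0 Zkernel_sum1 _ f_le.
apply: (expected_sum_osc _ _ Zkernel_ge0 Zkernel_sum1 _ hF _ _ (ltn0Sn m0)) => //.
  by rewrite lam_gt0 (doeblin_le1 XAkernel_sum1 doeb).
exact: doeblin_osc_contraction doeb.
Qed.

End PostAttackChain.

Section Constants.
Context {R : realType}.

Lemma min_nonzero_itv {A B : finType} {Q : A -> B -> R} :
  (forall a b, 0 <= Q a b) -> 0 <= min_nonzero Q <= 1.
Proof.
move=> Q_ge0; apply/andP; split.
  apply: (big_ind (fun x => 0 <= x)) => // [x y x0 y0|a _]; first by rewrite le_min x0.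
  by apply: (big_ind (fun x => 0 <= x)) => // x y x0 y0; rewrite le_min x0.
by apply: (big_rec (fun x => x <= 1)) => // a x _ x_le1; rewrite ge_min x_le1 orbT.
Qed.

Lemma scaled_min_nonzero_itv {A B C D E G : finType} {Q1 : A -> B -> R}
  {Q2 : C -> D -> R} {Q3 : E -> G -> R} {lam : R} :
  (forall a b, 0 <= Q1 a b) -> (forall c d, 0 <= Q2 c d) -> (forall e g, 0 <= Q3 e g) ->
  0 <= lam ->
  0 <= lam * min_nonzero Q1 * min_nonzero Q2 ^+ 2 * min_nonzero Q3 ^+ 2 <= lam.
Proof.
move=> /min_nonzero_itv/andP[a0 a1] /min_nonzero_itv/andP[b0 b1].
move=> /min_nonzero_itv/andP[c0 c1] lam_ge0.
rewrite !mulr_ge0 ?exprn_ge0 //= -!mulrA ler_piMr //.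
by rewrite !mulr_ile1 ?mulr_ge0 ?exprn_ge0 ?expr_le1.
Qed.

Lemma supnorm_Omega_ge0 {Z : finType} (K f : Z -> Z -> R) : 0 <= supnorm_Omega K f.
Proof. by apply: (big_ind (fun x => 0 <= x)) => // x y x0 y0; rewrite le_max x0. Qed.

Lemma supnorm_Omega_le {Z : finType} (K f : Z -> Z -> R) z z' :
  0 < K z z' -> `|f z z'| <= supnorm_Omega K f.
Proof. by move=> Kzz'; apply: (@le_bigmax_cond _ _ _ _ (z, z')). Qed.

Lemma osc_budget_le (F lam lam1 : R) (M : nat) : 0 <= F -> 0 < lam1 <= lam -> lam <= 1 ->
  2 * F + 2 * F * M%:R / lam <= 2 * M.+1%:R * F / lam1.
Proof.
move=> F_ge0 /andP[lam1_gt0 lam1_le] lam_le1.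
have lam_gt0 : 0 < lam := lt_le_trans lam1_gt0 lam1_le.
apply: (@le_trans _ _ (2 * M.+1%:R * F / lam)); last first.
  by rewrite ler_wpM2l ?lef_pV2 ?mulr_ge0 ?ler0n ?posrE.
have -> : 2 * M.+1%:R * F / lam = 2 * F / lam + 2 * F * M%:R / lam.
  by rewrite -natr1; field; rewrite lt0r_neq0.
by rewrite lerD2r ler_pdivlMr // ler_piMr ?mulr_ge0.
Qed.

End Constants.

Theorem lemma5 (R : realType) (n m : nat)
  (Rk : ('I_n * 'I_m) -> 'I_n -> R) (gam : 'I_n -> 'I_m -> R)
  (phi : 'I_n * 'I_n -> 'I_n -> R)
  (p0 : ('I_n * 'I_m * 'I_n) -> R)
  (m0 : nat) (lam : R)
  (f : ('I_n * 'I_m * 'I_n) -> ('I_n * 'I_m * 'I_n) -> R)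
  (N : nat) (eps : R) :
  stochastic Rk -> stochastic gam -> stochastic phi -> distribution p0 ->
  doeblin (XAkernel Rk gam phi) m0 lam ->
  let K := Zkernel Rk gam phi in
  let lam1 := lam * min_nonzero Rk * min_nonzero gam ^+ 2
                  * min_nonzero phi ^+ 2 in
  let mu := 2 * (m0 + 2)%:R * supnorm_Omega K f / lam1 in
  let P := path_prob p0 K (N := N) in
  let S := Ssum f (N := N) in
  let ES := \sum_(w : {ffun 'I_N.+1 -> 'I_n * 'I_m * 'I_n}) P w * S w in
  0 < eps -> mu / eps < N%:R ->
  \sum_(w : {ffun 'I_N.+1 -> 'I_n * 'I_m * 'I_n} | N%:R * eps <= `|S w - ES|) P w
  <= 2 * expR (- 2 * ((N%:R * eps - mu) ^+ 2 / (N%:R * mu ^+ 2))).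
Proof.
move=> sR sG sP [p0_ge0 p0_sum1] doeb K lam1 mu P S ES eps_gt0 N_gt.
have K_ge0 := Zkernel_ge0 sR sG sP; have K_sum1 := Zkernel_sum1 sR sG sP.
have [lam_gt0 _] := doeb.
have /andP[lam1_ge0 lam1_le] : 0 <= lam1 <= lam.
  exact: scaled_min_nonzero_itv (proj1 sR) (proj1 sG) (proj1 sP) (ltW lam_gt0).
set F := supnorm_Omega K f; have F_ge0 : 0 <= F := supnorm_Omega_ge0 K f.
(* [mu = 0] when [f] vanishes on Omega or [lam1 = 0] (then [/ lam1] is [0]). *)
have [mu0|mu_neq0] := eqVneq mu 0.
  rewrite mu0 expr0n /= mulr0 invr0 !mulr0 expR0 mulr1.
  exact: le_trans (sum_path_prob_le1 _ _ _ K_ge0 K_sum1 p0_ge0 p0_sum1 _) (ler1n R 2).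
have lam1_gt0 : 0 < lam1.
  rewrite lt0r lam1_ge0 andbT; apply: contraNneq mu_neq0 => lam1_0.
  by rewrite /mu lam1_0 invr0 mulr0.
have f_le := supnorm_Omega_le K f.
apply: (markov_chain_deviation_le _ _ _ _ K_ge0 K_sum1 p0_ge0 p0_sum1 _ f_le _ _ F_ge0 _
  (Zkernel_expected_sum_osc sR sG sP f_le doeb)).
- by rewrite divr_ge0 ?mulr_ge0 // ltW.
- have lam_le1 := doeblin_le1 (XAkernel_sum1 sR sG sP) doeb.
  by rewrite /mu addn2 osc_budget_le // lam1_gt0 lam1_le.
- by rewrite lt0r mu_neq0 /mu divr_ge0 // !mulr_ge0 ?ler0n.
- by rewrite -ltr_pdivrMr.
Qed.
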